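(* Fix $2\le d\le7$ and let $(\hat a_*,\hat b_*,\hat c_* )$ be given by: $d=2$: $(0.5,0.7,0.27)$; $d=3$: $(0.4,0.6,0.2)$; $d=4$: $(0.3,0.5,0.1)$; $d=5$: $(0.3,0.4,0.1)$; $d=6$: $(0.27,0.32,0.1)$; $d=7$: $(0.26,0.27,0.01)$. Then for any $0\le c<1$, $\psi^{(k)}(\mathcal{S}_{0,1,c})\subset\mathcal{S}_{\hat a_*,\hat b_*,\hat c_*}$ for all large enough $k$.
   Context: For a probability distribution $z$ on $\mathbb{Z}$ set $A(z)_i=(z_{i-1}+z_i+z_{i+1})^d$, $F(z)=A(z)/\sum_iA(z)_i$. $\mathcal{E}$ is the set of symmetric probability distributions on $\mathbb{Z}$ whose support is an interval or all of $\mathbb{Z}$. $\mathsf R\colon\mathcal{E}\to[0,\infty)^{\{1,2,\dots\}}$, $\mathsf R(z)_i=z_i/z_{i-1}$ if $z_{i-1}\ne0$ and $0$ otherwise; $\mathsf R$ is injective, $\mathcal{R}:=\mathsf R(\mathcal{E})$, $\psi:=\mathsf R\circ F\circ\mathsf R^{-1}\colon\mathcal{R}\to\mathcal{R}$, i.e. $\psi(x)_1=\big(\frac{1+x_1+x_1x_2}{1+2x_1}\big)^d$ and $\psi(x)_n=x_{n-1}^d\big(\frac{1+x_n+x_nx_{n+1}}{1+x_{n-1}+x_{n-1}x_n}\big)^d$ for $n\ge2$; $\psi^{(k)}$ is its $k$-fold iterate. For reals $a,b,c$, $\mathcal{S}_{a,b,c}:=\{x\in\mathcal{R}: a\le x_1\le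 b,\ 0\le x_n\le c\ \forall n\ge2\}$. *)

From Stdlib Require Import Reals ZArith Lra.
Open Scope R_scope.

(** Probability distributions on Z are functions z : Z -> R.
    The total mass over Z is z 0 + sum_{n>=1} (z n + z (-n)). *)
Definition mass_series (z : Z -> R) (n : nat) : R :=
  match n with
  | O => z 0%Z
  | S m => z (Z.of_nat (S m)) + z (- Z.of_nat (S m))%Z
  end.

Definition is_prob (z : Z -> R) : Prop :=
  (forall i, 0 <= z i) /\ infinite_sum (mass_series z) 1.

Definition symmetric (z : Z -> R) : Prop := forall i, z (- i)%Z = z i.

Definition support_interval (z : Z -> R) : Prop :=
  forall i j k, (i <= j <= k)%Z -> z i <> 0 -> z k <> 0 -> z j <> 0.

Definition in_E (z : Z -> R) : Prop :=
  is_prob z /\ symmetric z /\ support_interval z.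

(** Sequences indexed by {1,2,...} are represented as x : nat -> R, where
    x n is the n-th coordinate for n >= 1; coordinate 0 is unused. *)
Definition Rmap (z : Z -> R) : nat -> R :=
  fun i => match i with
           | O => 0
           | S _ => if Req_EM_T (z (Z.of_nat i - 1)%Z) 0 then 0
                    else z (Z.of_nat i) / z (Z.of_nat i - 1)%Z
           end.

Definition in_calR (x : nat -> R) : Prop :=
  exists z, in_E z /\ forall n, (1 <= n)%nat -> x n = Rmap z n.

Definition psi (d : nat) (x : nat -> R) : nat -> R :=
  fun n => match n with
           | O => 0
           | S O => ((1 + x 1%nat + x 1%nat * x 2%nat) / (1 + 2 * x 1%nat)) ^ d
           | S m => x m ^ d *
                    ((1 + x n + x n * x (S n)) / (1 + x m + x m * x n)) ^ d
           end.

Definition psi_iter (d k : nat) (x : nat -> R) : nat -> R := Nat.iter k (psi d) x.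

Definition in_S (a b c : R) (x : nat -> R) : Prop :=
  in_calR x /\ a <= x 1%nat <= b /\ (forall n, (2 <= n)%nat -> 0 <= x n <= c).

Definition hat_a (d : nat) : R :=
  match d with
  | 2 => 5/10 | 3 => 4/10 | 4 => 3/10 | 5 => 3/10
  | 6 => 27/100 | 7 => 26/100 | _ => 0 end.
Definition hat_b (d : nat) : R :=
  match d with
  | 2 => 7/10 | 3 => 6/10 | 4 => 5/10 | 5 => 4/10
  | 6 => 32/100 | 7 => 27/100 | _ => 0 end.
Definition hat_c (d : nat) : R :=
  match d with
  | 2 => 27/100 | 3 => 2/10 | 4 => 1/10 | 5 => 1/10
  | 6 => 1/10 | 7 => 1/100 | _ => 0 end.

From Pilot Require Import Defs.
From Stdlib Require Import Reals Lra Lia ZArith QArith Qreals Qround Qminmax.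
Open Scope R_scope.

(* For z in E the weights A(z)_i = (z_(i-1) + z_i + z_(i+1))^d are symmetric, summable
   and their support is closed under moving towards 0, so their normalisation F(z) is
   again in E; since z_(n-1) + z_n + z_(n+1) = z_(n-1) (1 + x_n + x_n x_(n+1)) for
   x = R z, the ratio sequence of F(z) is psi(x).  Hence psi preserves calR.
   Each coordinate of psi(x) is monotone in the coordinates it depends on, so psi maps
   a box S_{a,b,c} into a box with explicit rational bounds.  From S_{0,1,c} the tail
   bound improves as 1 - c' >= (21/20) (1 - c) until c' <= 3/5; from S_{0,1,3/5},
   100 steps of the box map, computed in exact rational arithmetic and rounded
   outwards, land in the target box for each 2 <= d <= 7. *)

Definition radial_support (u : Z -> R) : Prop :=
  forall i j, (Z.abs j <= Z.abs i)%Z -> u i <> 0 -> u j <> 0.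

Lemma radial_support_interval u : radial_support u -> support_interval u.
Proof.
  intros Hu i j k Hijk Hi Hk.
  destruct (Z_le_gt_dec (Z.abs j) (Z.abs i)).
  - exact (Hu i j ltac:(lia) Hi).
  - exact (Hu k j ltac:(lia) Hk).
Qed.

Lemma sum_f_R0_ge_last (f : nat -> R) N :
  (forall n, 0 <= f n) -> f N <= sum_f_R0 f N.
Proof.
  intros Hf. destruct N as [|N]; simpl; [lra|].
  pose proof (cond_pos_sum f N Hf). lra.
Qed.

Section ClassE.

Variable z : Z -> R.
Hypothesis Hz : in_E z.

Lemma E_nonneg i : 0 <= z i.
Proof. apply Hz. Qed.

Lemma E_symmetric : Defs.symmetric z.
Proof. apply Hz. Qed.

Lemma E_mass_nonneg n : 0 <= mass_series z n.
Proof.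
  destruct n; unfold mass_series; [apply E_nonneg|].
  pose proof (E_nonneg (Z.of_nat (S n))). pose proof (E_nonneg (- Z.of_nat (S n))). lra.
Qed.

Lemma E_partial_sum_le1 N : sum_f_R0 (mass_series z) N <= 1.
Proof. apply sum_incr; [apply Hz | apply E_mass_nonneg]. Qed.

Lemma E_le1 i : z i <= 1.
Proof.
  assert (Habs : z i = z (Z.of_nat (Z.abs_nat i))).
  { rewrite Zabs2Nat.id_abs. destruct (Z_le_gt_dec 0 i).
    - now rewrite Z.abs_eq.
    - rewrite Z.abs_neq by lia. symmetry. apply E_symmetric. }
  rewrite Habs. generalize (Z.abs_nat i) as n. intro n.
  apply Rle_trans with (mass_series z n).
  - destruct n as [|n]; unfold mass_series; [apply Rle_refl|].
    pose proof (E_nonneg (- Z.of_nat (S n))). lra.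
  - apply Rle_trans with (sum_f_R0 (mass_series z) n).
    + apply sum_f_R0_ge_last, E_mass_nonneg.
    + apply E_partial_sum_le1.
Qed.

Lemma E_radial_support : radial_support z.
Proof.
  destruct Hz as [_ [Hsym Hint]]. intros i j Hji Hi.
  assert (Hi' : z (- i)%Z <> 0) by now rewrite Hsym.
  destruct (Z_le_gt_dec 0 i).
  - apply (Hint (- i) j i)%Z; auto; lia.
  - apply (Hint i j (- i))%Z; auto; lia.
Qed.

Lemma E_center_pos : 0 < z 0%Z.
Proof.
  destruct (Req_EM_T (z 0%Z) 0) as [H0|H0]; [|pose proof (E_nonneg 0); lra].
  exfalso.
  assert (Hzero : forall i, z i = 0).
  { intro i. destruct (Req_EM_T (z i) 0) as [|Hi]; auto.
    exfalso. exact (E_radial_support i 0%Z ltac:(lia) Hi H0). }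
  destruct Hz as [[_ Hsum] _]. destruct (Hsum 1) as [N HN]; [lra|].
  specialize (HN N (Nat.le_refl N)).
  rewrite sum_eq_R0 in HN by (intros [|n] _; simpl; rewrite ?Hzero; lra).
  unfold Rdist in HN. rewrite Rabs_left in HN; lra.
Qed.

Lemma E_zero_succ m : z (Z.of_nat m) = 0 -> z (Z.of_nat (S m)) = 0.
Proof.
  intros Hm. destruct (Req_EM_T (z (Z.of_nat (S m))) 0) as [|Hs]; auto.
  exfalso. exact (E_radial_support (Z.of_nat (S m)) (Z.of_nat m) ltac:(lia) Hs Hm).
Qed.

End ClassE.

Definition nbhd_sum (z : Z -> R) (i : Z) : R := z (i - 1)%Z + z i + z (i + 1)%Z.

Definition nbhd_factor (x : nat -> R) (n : nat) : R := 1 + x n + x n * x (S n).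

Definition A (d : nat) (z : Z -> R) (i : Z) : R := nbhd_sum z i ^ d.

(* Exact form of sum_{|i|<=N} nbhd_sum z i <= 3 sum_{|i|<=N+1} z i ; the boundary terms are
   what make the induction go through. *)
Lemma nbhd_partial_sum (z : Z -> R) N :
  sum_f_R0 (mass_series (nbhd_sum z)) N
  + (z (Z.of_nat N) + z (- Z.of_nat N)%Z + 2 * mass_series z (S N))
  = 3 * sum_f_R0 (mass_series z) (S N).
Proof.
  induction N as [|N IH].
  - unfold nbhd_sum. simpl. ring.
  - rewrite tech5, (tech5 _ (S N)), Rmult_plus_distr_l, <- IH.
    unfold mass_series, nbhd_sum. rewrite !Nat2Z.inj_succ.
    set (n := Z.of_nat N).
    replace (Z.succ n - 1)%Z with n by lia.
    replace (Z.succ n + 1)%Z with (Z.succ (Z.succ n)) by lia.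
    replace (- Z.succ n - 1)%Z with (- Z.succ (Z.succ n))%Z by lia.
    replace (- Z.succ n + 1)%Z with (- n)%Z by lia.
    ring.
Qed.

Lemma mass_series_le (u v : Z -> R) C n :
  (forall i, u i <= C * v i) -> mass_series u n <= C * mass_series v n.
Proof.
  intros H. destruct n; unfold mass_series; [apply H|].
  rewrite Rmult_plus_distr_l. apply Rplus_le_compat; apply H.
Qed.

Lemma Rmap_succ (u : Z -> R) m :
  Rmap u (S m) =
  if Req_EM_T (u (Z.of_nat m)) 0 then 0 else u (Z.of_nat (S m)) / u (Z.of_nat m).
Proof.
  unfold Rmap. replace (Z.of_nat (S m) - 1)%Z with (Z.of_nat m) by lia. reflexivity.
Qed.

Lemma Rmap_div (u : Z -> R) c n : c <> 0 -> Rmap (fun i => u i / c) n = Rmap u n.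
Proof.
  intros Hc. destruct n as [|m]; [reflexivity|]. rewrite !Rmap_succ.
  destruct (Req_EM_T (u (Z.of_nat m)) 0) as [E|E];
    destruct (Req_EM_T (u (Z.of_nat m) / c) 0) as [E'|E'].
  - reflexivity.
  - rewrite E in E'. unfold Rdiv in E'. lra.
  - exfalso. apply E. apply (Rmult_eq_reg_r (/ c)); [lra|]. apply Rinv_neq_0_compat in Hc. lra.
  - field. auto.
Qed.

Lemma Rmap_pow (u : Z -> R) d n : (1 <= d)%nat -> Rmap (fun i => u i ^ d) n = Rmap u n ^ d.
Proof.
  intros Hd. destruct n as [|m]; [simpl; rewrite pow_i by lia; reflexivity|].
  rewrite !Rmap_succ.
  destruct (Req_EM_T (u (Z.of_nat m)) 0) as [E|E];
    destruct (Req_EM_T (u (Z.of_nat m) ^ d) 0) as [E'|E'].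
  - rewrite pow_i by lia. reflexivity.
  - rewrite E, pow_i in E' by lia. lra.
  - exfalso. exact (pow_nonzero _ d E E').
  - unfold Rdiv. rewrite Rpow_mult_distr, pow_inv. reflexivity.
Qed.

Lemma psi_ext d (x y : nat -> R) :
  (forall n, (1 <= n)%nat -> x n = y n) ->
  forall n, (1 <= n)%nat -> psi d x n = psi d y n.
Proof.
  intros H [|[|m]] Hn; [lia| |]; unfold psi; rewrite !H by lia; reflexivity.
Qed.

Lemma normalize_in_E (u : Z -> R) l :
  (forall i, 0 <= u i) -> Defs.symmetric u -> radial_support u -> 0 < u 0%Z ->
  infinite_sum (mass_series u) l -> 0 < l /\ in_E (fun i => u i / l).
Proof.
  intros Hnn Hsym Hrad H0 HS.
  assert (HSpos : 0 < l).
  { apply Rlt_le_trans with (u 0%Z); [exact H0|].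
    apply (sum_incr (mass_series u) 0 l HS).
    intros [|n]; unfold mass_series; [apply Hnn|].
    pose proof (Hnn (Z.of_nat (S n))). pose proof (Hnn (- Z.of_nat (S n))%Z). lra. }
  split; [exact HSpos|]. split; [split|split].
  - intro i. unfold Rdiv. apply Rmult_le_pos; [apply Hnn|left; apply Rinv_0_lt_compat; lra].
  - intros eps Heps. destruct (HS (eps * l)) as [N HN]; [nra|].
    exists N. intros n Hn. specialize (HN n Hn).
    assert (Hsum : sum_f_R0 (mass_series (fun i => u i / l)) n
                   = / l * sum_f_R0 (mass_series u) n).
    { rewrite scal_sum. apply sum_eq. intros [|k] _; unfold mass_series; field; lra. }
    rewrite Hsum. replace 1 with (/ l * l) by (field; lra).
    rewrite Rdist_mult_l, Rabs_right by (left; apply Rinv_0_lt_compat; lra).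
    apply Rmult_lt_reg_l with l; [lra|]. rewrite <- Rmult_assoc, Rinv_r; lra.
  - intro i. now rewrite Hsym.
  - apply radial_support_interval. intros i j Hji Hi Hj.
    apply (Hrad i j Hji); [intro E; apply Hi; rewrite E; unfold Rdiv; ring|].
    apply (Rmult_eq_reg_r (/ l)); [|apply Rinv_neq_0_compat; lra]. rewrite Rmult_0_l. exact Hj.
Qed.

Section Weights.

Variable z : Z -> R.
Hypothesis Hz : in_E z.

Let x := Rmap z.

Lemma nbhd_sum_nonneg i : 0 <= nbhd_sum z i.
Proof.
  unfold nbhd_sum.
  pose proof (E_nonneg z Hz (i - 1)). pose proof (E_nonneg z Hz i).
  pose proof (E_nonneg z Hz (i + 1)).
  lra.
Qed.

Lemma nbhd_sum_le3 i : nbhd_sum z i <= 3.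
Proof.
  unfold nbhd_sum.
  pose proof (E_le1 z Hz (i - 1)). pose proof (E_le1 z Hz i). pose proof (E_le1 z Hz (i + 1)).
  lra.
Qed.

Lemma nbhd_sum_symmetric : Defs.symmetric (nbhd_sum z).
Proof.
  intro i. unfold nbhd_sum.
  replace (- i - 1)%Z with (- (i + 1))%Z by lia.
  replace (- i + 1)%Z with (- (i - 1))%Z by lia.
  rewrite !(E_symmetric z Hz). ring.
Qed.

Lemma nbhd_sum_ge i k : (i - 1 <= k <= i + 1)%Z -> z k <= nbhd_sum z i.
Proof.
  intros Hk. unfold nbhd_sum.
  pose proof (E_nonneg z Hz (i - 1)). pose proof (E_nonneg z Hz i).
  pose proof (E_nonneg z Hz (i + 1)).
  assert (Hk3 : (k = i - 1 \/ k = i \/ k = i + 1)%Z) by lia.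
  destruct Hk3 as [Hk3 | [Hk3 | Hk3]]; subst k; lra.
Qed.

Lemma nbhd_sum_radial_support : radial_support (nbhd_sum z).
Proof.
  intros i j Hji Hi.
  assert (Hk : exists k, (i - 1 <= k <= i + 1)%Z /\ z k <> 0).
  { unfold nbhd_sum in Hi.
    destruct (Req_EM_T (z (i - 1)%Z) 0) as [E1|E1]; [|exists (i - 1)%Z; split; [lia|exact E1]].
    destruct (Req_EM_T (z i) 0) as [E2|E2]; [|exists i; split; [lia|exact E2]].
    exists (i + 1)%Z. split; [lia|]. intro E3. apply Hi. rewrite E1, E2, E3. ring. }
  destruct Hk as [k [Hk Hzk]].
  assert (Hl : exists l, (j - 1 <= l <= j + 1)%Z /\ (Z.abs l <= Z.abs k)%Z).
  { destruct (Z.lt_trichotomy j 0) as [Hj|[Hj|Hj]].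
    - exists (j + 1)%Z. split; lia.
    - exists 0%Z. split; lia.
    - exists (j - 1)%Z. split; lia. }
  destruct Hl as [l [Hl Hlk]].
  pose proof (E_radial_support z Hz k l Hlk Hzk).
  pose proof (E_nonneg z Hz l). pose proof (nbhd_sum_ge j l Hl). lra.
Qed.

Lemma Rmap_E_nonneg n : 0 <= x n.
Proof.
  destruct n as [|n]; [simpl; lra|]. unfold x. rewrite Rmap_succ.
  destruct (Req_EM_T _ 0); [lra|].
  pose proof (E_nonneg z Hz (Z.of_nat n)). pose proof (E_nonneg z Hz (Z.of_nat (S n))).
  unfold Rdiv. apply Rmult_le_pos; [lra|]. left. apply Rinv_0_lt_compat. lra.
Qed.

Lemma nbhd_factor_ge1 n : 1 <= nbhd_factor x n.
Proof.
  unfold nbhd_factor. pose proof (Rmap_E_nonneg n). pose proof (Rmap_E_nonneg (S n)). nra.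
Qed.

(* Also when z m = 0 or z (m+1) = 0: the support of z is an interval around 0. *)
Lemma nbhd_sum_succ m :
  nbhd_sum z (Z.of_nat (S m)) = z (Z.of_nat m) * nbhd_factor x (S m).
Proof.
  unfold nbhd_sum, nbhd_factor, x. rewrite !Rmap_succ.
  replace (Z.of_nat (S m) - 1)%Z with (Z.of_nat m) by lia.
  replace (Z.of_nat (S m) + 1)%Z with (Z.of_nat (S (S m))) by lia.
  destruct (Req_EM_T (z (Z.of_nat m)) 0) as [E0|E0].
  - pose proof (E_zero_succ z Hz m E0) as E1. pose proof (E_zero_succ z Hz (S m) E1) as E2.
    rewrite E0, E1, E2. ring.
  - destruct (Req_EM_T (z (Z.of_nat (S m))) 0) as [E1|E1].
    + rewrite E1, (E_zero_succ z Hz (S m) E1). field. exact E0.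
    + field. auto.
Qed.

Lemma nbhd_sum_0 : nbhd_sum z 0 = z 0%Z * (1 + 2 * x 1%nat).
Proof.
  pose proof (E_center_pos z Hz).
  unfold nbhd_sum, x. rewrite Rmap_succ. simpl.
  destruct (Req_EM_T (z 0%Z) 0); [lra|].
  change (-1)%Z with (- (1))%Z. rewrite (E_symmetric z Hz). field. lra.
Qed.

Lemma Rmap_nbhd_sum_1 : Rmap (nbhd_sum z) 1 = nbhd_factor x 1 / (1 + 2 * x 1%nat).
Proof.
  pose proof (E_center_pos z Hz). pose proof (nbhd_factor_ge1 1). pose proof (Rmap_E_nonneg 1).
  rewrite Rmap_succ. change (Z.of_nat 0) with 0%Z. rewrite nbhd_sum_0, (nbhd_sum_succ 0).
  change (Z.of_nat 0) with 0%Z.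
  destruct (Req_EM_T _ 0) as [E|E]; [nra|]. field. lra.
Qed.

Lemma Rmap_nbhd_sum_succ m :
  Rmap (nbhd_sum z) (S (S m)) = x (S m) * (nbhd_factor x (S (S m)) / nbhd_factor x (S m)).
Proof.
  pose proof (nbhd_factor_ge1 (S m)). pose proof (nbhd_factor_ge1 (S (S m))).
  assert (Hx : x (S m) = if Req_EM_T (z (Z.of_nat m)) 0 then 0
                         else z (Z.of_nat (S m)) / z (Z.of_nat m)) by apply Rmap_succ.
  rewrite Rmap_succ, !nbhd_sum_succ.
  destruct (Req_EM_T (z (Z.of_nat m)) 0) as [E|E].
  - rewrite Hx, E, Rmult_0_l. destruct (Req_EM_T 0 0); [ring|lra].
  - destruct (Req_EM_T _ 0) as [E'|E'].
    + exfalso. apply Rmult_integral in E' as [E'|E']; [exact (E E')|lra].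
    + rewrite Hx. field. repeat split; lra.
Qed.

Variable d : nat.
Hypothesis Hd : (1 <= d)%nat.

Lemma A_summable : { l | infinite_sum (mass_series (A d z)) l }.
Proof.
  assert (HA : forall i, 0 <= A d z i <= 3 ^ (d - 1) * nbhd_sum z i).
  { intro i. unfold A. pose proof (nbhd_sum_nonneg i). split; [apply pow_le; lra|].
    replace d with (S (d - 1)) at 1 by lia. simpl. rewrite Rmult_comm.
    apply Rmult_le_compat_r; [lra|]. apply pow_incr. pose proof (nbhd_sum_le3 i). lra. }
  assert (Hmass : forall n, 0 <= mass_series (A d z) n).
  { intros [|n]; unfold mass_series; [apply HA|].
    pose proof (HA (Z.of_nat (S n))). pose proof (HA (- Z.of_nat (S n))%Z). lra. }
  apply growing_cv.
  - intro n. rewrite tech5. pose proof (Hmass (S n)). lra.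
  - exists (3 ^ (d - 1) * 3). intros s [N ->].
    apply Rle_trans with (sum_f_R0 (fun n => mass_series (nbhd_sum z) n * 3 ^ (d - 1)) N).
    + apply sum_Rle. intros n _. rewrite Rmult_comm. apply mass_series_le. apply HA.
    + rewrite <- scal_sum. apply Rmult_le_compat_l; [apply pow_le; lra|].
      pose proof (nbhd_partial_sum z N). pose proof (E_partial_sum_le1 z Hz (S N)).
      pose proof (E_nonneg z Hz (Z.of_nat N)). pose proof (E_nonneg z Hz (- Z.of_nat N)%Z).
      pose proof (E_mass_nonneg z Hz (S N)). lra.
Qed.

Lemma Rmap_A n : (1 <= n)%nat -> Rmap (A d z) n = psi d x n.
Proof.
  intros Hn. unfold A. rewrite Rmap_pow by exact Hd.
  destruct n as [|[|m]]; [lia| |].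
  - rewrite Rmap_nbhd_sum_1. reflexivity.
  - rewrite Rmap_nbhd_sum_succ, Rpow_mult_distr. reflexivity.
Qed.

Lemma A_in_E l :
  infinite_sum (mass_series (A d z)) l -> 0 < l /\ in_E (fun i => A d z i / l).
Proof.
  intros HS. apply normalize_in_E; [| | | |exact HS].
  - intro i. apply pow_le, nbhd_sum_nonneg.
  - intro i. unfold A. now rewrite nbhd_sum_symmetric.
  - intros i j Hji Hi. apply pow_nonzero. apply (nbhd_sum_radial_support i j Hji).
    intro E. apply Hi. unfold A. rewrite E. apply pow_i. lia.
  - unfold A. apply pow_lt. rewrite nbhd_sum_0.
    pose proof (E_center_pos z Hz). pose proof (Rmap_E_nonneg 1). nra.
Qed.

End Weights.

Lemma psi_preserves_calR d x : (1 <= d)%nat -> in_calR x -> in_calR (psi d x).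
Proof.
  intros Hd [z [Hz Hx]].
  destruct (A_summable z Hz d Hd) as [l Hl].
  destruct (A_in_E z Hz d Hd l Hl) as [Hlpos HE].
  exists (fun i => A d z i / l). split; [exact HE|].
  intros n Hn. rewrite Rmap_div by lra. rewrite Rmap_A by assumption.
  apply psi_ext; [|exact Hn]. intros k Hk. now rewrite Hx.
Qed.

Definition in_box (a b c : R) (x : nat -> R) : Prop :=
  a <= x 1%nat <= b /\ (forall n, (2 <= n)%nat -> 0 <= x n <= c).

Lemma in_box_weaken a b c a' b' c' x :
  a' <= a -> b <= b' -> c <= c' -> in_box a b c x -> in_box a' b' c' x.
Proof. intros Ha Hb Hc [H1 Hn]. split; [lra|]. intros n Hn2. specialize (Hn n Hn2). lra. Qed.

Lemma Rdiv_le_cross p q r s : 0 < q -> 0 < s -> p * s <= r * q -> p / q <= r / s.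
Proof.
  intros Hq Hs H. apply Rmult_le_reg_r with (q * s); [nra|].
  replace (p / q * (q * s)) with (p * s) by (field; lra).
  replace (r / s * (q * s)) with (r * q) by (field; lra). exact H.
Qed.

Lemma Rdiv_nonneg p q : 0 <= p -> 0 < q -> 0 <= p / q.
Proof. intros. unfold Rdiv. apply Rmult_le_pos; [lra|]. left. apply Rinv_0_lt_compat. lra. Qed.

Lemma psi_1_lower d b x :
  0 <= x 1%nat <= b -> 0 <= x 2%nat -> ((1 + b) / (1 + 2 * b)) ^ d <= psi d x 1.
Proof.
  intros H1 H2. apply pow_incr. split; [apply Rdiv_nonneg; lra|].
  apply Rdiv_le_cross; [lra|lra|].
  assert (0 <= x 1%nat * x 2%nat * (1 + 2 * b)) by (repeat apply Rmult_le_pos; lra). nra.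
Qed.

(* c <= 1 is what makes (1 + t + t c) / (1 + 2 t) nonincreasing in t. *)
Lemma psi_1_upper d a c x :
  0 <= a <= x 1%nat -> 0 <= x 2%nat <= c -> c <= 1 ->
  psi d x 1 <= ((1 + a + a * c) / (1 + 2 * a)) ^ d.
Proof.
  intros H1 H2 Hc. apply pow_incr. split; [apply Rdiv_nonneg; nra|].
  apply Rdiv_le_cross; [lra|lra|].
  assert (x 1%nat * x 2%nat <= x 1%nat * c) by nra. nra.
Qed.

Lemma tail_ratio_le p q r M c :
  0 <= p <= M -> 0 <= q <= c -> 0 <= r <= c ->
  p * (1 + q + q * r) / (1 + p + p * q) <= M * (1 + c + c * c) / (1 + M + M * c).
Proof.
  intros Hp Hq Hr.
  assert (0 <= p * q) by nra. assert (0 <= q * r) by nra. assert (0 <= p * c) by nra.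
  assert (0 <= M * c) by nra.
  apply Rle_trans with (p * (1 + q + q * c) / (1 + p + p * q)).
  { apply Rdiv_le_cross; [nra|nra|].
    assert (0 <= p * q * (c - r) * (1 + p + p * q)) by (repeat apply Rmult_le_pos; nra). nra. }
  apply Rle_trans with (p * (1 + c + c * c) / (1 + p + p * c)).
  { apply Rdiv_le_cross; [nra|nra|].
    assert (0 <= p * (c - q) * (1 + c + p * c)) by (repeat apply Rmult_le_pos; nra). nra. }
  apply Rdiv_le_cross; [nra|nra|].
  assert (0 <= (M - p) * (1 + c + c * c)) by (apply Rmult_le_pos; nra). nra.
Qed.

Lemma psi_tail_bound d M c x m :
  0 <= x (S m) <= M -> 0 <= x (S (S m)) <= c -> 0 <= x (S (S (S m))) <= c ->
  0 <= psi d x (S (S m)) <= (M * (1 + c + c * c) / (1 + M + M * c)) ^ d.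
Proof.
  intros Hp Hq Hr. cbv beta iota delta [psi].
  rewrite <- Rpow_mult_distr.
  set (p := x (S m)) in *. set (q := x (S (S m))) in *. set (r := x (S (S (S m)))) in *.
  replace (p * ((1 + q + q * r) / (1 + p + p * q))) with (p * (1 + q + q * r) / (1 + p + p * q))
    by (unfold Rdiv; ring).
  assert (0 <= p * q) by nra. assert (0 <= q * r) by nra.
  assert (Hnn : 0 <= p * (1 + q + q * r) / (1 + p + p * q))
    by (apply Rdiv_nonneg; [apply Rmult_le_pos|]; lra).
  split; [apply pow_le; exact Hnn|].
  apply pow_incr. split; [exact Hnn|]. apply tail_ratio_le; assumption.
Qed.

Lemma psi_box d a b c M a' b' c' x :
  0 <= a -> c <= 1 -> b <= M -> c <= M ->
  a' <= ((1 + b) / (1 + 2 * b)) ^ d ->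
  ((1 + a + a * c) / (1 + 2 * a)) ^ d <= b' ->
  (M * (1 + c + c * c) / (1 + M + M * c)) ^ d <= c' ->
  in_box a b c x -> in_box a' b' c' (psi d x).
Proof.
  intros Ha Hc HbM HcM Ha' Hb' Hc' [Hx1 Hxn].
  pose proof (Hxn 2%nat ltac:(lia)) as Hx2.
  split.
  - split.
    + apply Rle_trans with (((1 + b) / (1 + 2 * b)) ^ d); [exact Ha'|].
      apply psi_1_lower; lra.
    + apply Rle_trans with (((1 + a + a * c) / (1 + 2 * a)) ^ d); [|exact Hb'].
      apply psi_1_upper; lra.
  - intros [|[|m]] Hn; [lia|lia|].
    assert (Hp : 0 <= x (S m) <= M).
    { destruct m as [|m]; [lra|]. pose proof (Hxn (S (S m)) ltac:(lia)). lra. }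
    pose proof (Hxn (S (S m)) ltac:(lia)) as Hq. pose proof (Hxn (S (S (S m))) ltac:(lia)) as Hr.
    pose proof (psi_tail_bound d M c x m Hp Hq Hr). lra.
Qed.

Lemma pow_le_pow_le1 t m n : 0 <= t <= 1 -> (m <= n)%nat -> t ^ n <= t ^ m.
Proof.
  intros Ht Hmn. replace n with ((n - m) + m)%nat by lia. rewrite pow_add.
  assert (t ^ (n - m) <= 1) by (rewrite <- (pow1 (n - m)); apply pow_incr; lra).
  assert (0 <= t ^ m) by (apply pow_le; lra). nra.
Qed.

(* For c <= 3/5 the ratio is at most 387/500 < sqrt(3/5); for c >= 3/5 the inequality
   reduces to the nonnegativity of the cubic factor used below. *)
Lemma tail_contraction c :
  0 <= c <= 1 -> ((1 + c + c * c) / (2 + c)) ^ 2 <= Rmax (3/5) (1 - 21/20 * (1 - c)).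
Proof.
  intros Hc. set (t := (1 + c + c * c) / (2 + c)).
  assert (Ht : t * (2 + c) = 1 + c + c * c) by (unfold t; field; lra).
  assert (Ht0 : 0 <= t) by (apply Rdiv_nonneg; nra).
  simpl. rewrite Rmult_1_r.
  destruct (Rle_dec c (3/5)).
  - apply Rle_trans with (3/5); [|apply Rmax_l].
    assert (t <= 387/500) by nra. nra.
  - apply Rle_trans with (1 - 21/20 * (1 - c)); [|apply Rmax_r].
    assert (0 <= (1 - c) * (c * c * c + 195/100 * c * c + 8/10 * c - 12/10))
      by (apply Rmult_le_pos; nra).
    apply Rmult_le_reg_r with ((2 + c) * (2 + c)); [nra|].
    replace (t * t * ((2 + c) * (2 + c))) with ((t * (2 + c)) * (t * (2 + c))) by ring.
    rewrite Ht. nra.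
Qed.

Lemma psi_box_01 d c x :
  (2 <= d)%nat -> 0 <= c <= 1 -> in_box 0 1 c x ->
  in_box 0 1 (Rmax (3/5) (1 - 21/20 * (1 - c))) (psi d x).
Proof.
  intros Hd Hc. apply psi_box with 1; try lra.
  - apply pow_le. apply Rdiv_nonneg; lra.
  - replace ((1 + 0 + 0 * c) / (1 + 2 * 0)) with 1 by field. rewrite pow1. lra.
  - replace (1 * (1 + c + c * c) / (1 + 1 + 1 * c)) with ((1 + c + c * c) / (2 + c))
      by (field; lra).
    eapply Rle_trans; [|apply tail_contraction; exact Hc].
    apply pow_le_pow_le1; [|exact Hd]. split; [apply Rdiv_nonneg; nra|].
    apply Rmult_le_reg_r with (2 + c); [lra|]. unfold Rdiv. rewrite Rmult_assoc, Rinv_l; nra.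
Qed.

Definition tail_bound (c : R) (k : nat) : R := Rmax (3/5) (1 - (21/20) ^ k * (1 - c)).

Lemma iter_psi_box_01 d c x k :
  (2 <= d)%nat -> 0 <= c <= 1 -> in_box 0 1 c x ->
  in_box 0 1 (tail_bound c k) (Nat.iter k (psi d) x).
Proof.
  intros Hd Hc Hx. induction k as [|k IH].
  - apply in_box_weaken with 0 1 c; [lra|lra| |exact Hx].
    unfold tail_bound. simpl. apply Rle_trans with (1 - 1 * (1 - c)); [lra|apply Rmax_r].
  - assert (Hpow : 1 <= (21/20) ^ k) by (apply pow_R1_Rle; lra).
    assert (Hk : 0 <= tail_bound c k <= 1).
    { unfold tail_bound, Rmax. destruct (Rle_dec _ _); nra. }
    simpl Nat.iter.
    apply in_box_weaken with 0 1 (Rmax (3/5) (1 - 21/20 * (1 - tail_bound c k)));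
      [lra|lra| |apply psi_box_01; assumption].
    destruct (Rle_dec (3/5) (1 - (21/20) ^ k * (1 - c))) as [Hle|Hlt].
    + replace (tail_bound c k) with (1 - (21/20) ^ k * (1 - c))
        by (unfold tail_bound, Rmax; destruct (Rle_dec _ _); lra).
      unfold tail_bound. simpl pow.
      replace (1 - 21/20 * (1 - (1 - (21/20) ^ k * (1 - c))))
        with (1 - 21/20 * (21/20) ^ k * (1 - c)) by ring.
      apply Rle_refl.
    + replace (tail_bound c k) with (3/5)
        by (unfold tail_bound, Rmax; destruct (Rle_dec _ _); lra).
      apply Rle_trans with (3/5); [|apply Rmax_l].
      unfold Rmax. destruct (Rle_dec _ _); lra.
Qed.

Lemma tail_bound_eventually c :
  0 <= c < 1 -> exists K, forall k, (K <= k)%nat -> tail_bound c k = 3/5.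
Proof.
  intros Hc.
  destruct (Pow_x_infinity (21/20) ltac:(rewrite Rabs_right; lra) ((2/5) / (1 - c))) as [K HK].
  exists K. intros k Hk. specialize (HK k Hk).
  rewrite Rabs_right in HK by (left; apply pow_lt; lra).
  assert (HK' : 2/5 <= (21/20) ^ k * (1 - c)).
  { replace (2/5) with ((2/5) / (1 - c) * (1 - c)) by (field; lra).
    apply Rmult_le_compat_r; lra. }
  unfold tail_bound, Rmax. destruct (Rle_dec _ _); lra.
Qed.

Fixpoint qpow (q : Q) (n : nat) : Q :=
  match n with O => 1%Q | S n => (q * qpow q n)%Q end.

Definition grid : positive := 2 ^ 30.

Definition round_down (q : Q) : Q := Qfloor (q * inject_Z (Z.pos grid)) # grid.

Definition round_up (q : Q) : Q := Qceiling (q * inject_Z (Z.pos grid)) # grid.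

Definition qbox : Type := (Q * Q * Q)%type.

Definition in_qbox (B : qbox) (x : nat -> R) : Prop :=
  let '(a, b, c) := B in in_box (Q2R a) (Q2R b) (Q2R c) x.

(* Qred keeps the numbers small before taking d-th powers. *)
Definition qbox_step (d : nat) (B : qbox) : qbox :=
  let '(a, b, c) := B in
  let M := Qmax b c in
  (round_down (qpow (Qred ((1 + b) / (1 + 2 * b))) d),
   round_up (qpow (Qred ((1 + a + a * c) / (1 + 2 * a))) d),
   round_up (qpow (Qred (M * (1 + c + c * c) / (1 + M + M * c))) d))%Q.

Definition qbox_admissible (B : qbox) : bool :=
  let '(a, _, c) := B in Qle_bool 0 a && Qle_bool c 1.

Definition qbox_incl (B B' : qbox) : bool :=
  let '(a, b, c) := B in
  let '(a', b', c') := B' in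
  Qle_bool a' a && Qle_bool b b' && Qle_bool c c'.

Fixpoint qbox_orbit_lands (d n : nat) (B H : qbox) : bool :=
  match n with
  | O => qbox_incl B H
  | S n => qbox_admissible B && qbox_orbit_lands d n (qbox_step d B) H
  end.

Lemma Q2R_qpow q n : Q2R (qpow q n) = Q2R q ^ n.
Proof. induction n as [|n IH]; simpl; [apply RMicromega.Q2R_1|]. now rewrite Q2R_mult, IH. Qed.

Lemma Q2R_Qred q : Q2R (Qred q) = Q2R q.
Proof. apply Qeq_eqR, Qred_correct. Qed.

Lemma Q2R_2 : Q2R 2 = 2.
Proof. unfold Q2R. simpl. lra. Qed.

Lemma Q2R_div_pos x y : 0 < Q2R y -> Q2R (x / y) = Q2R x / Q2R y.
Proof.
  intros Hy. apply Q2R_div. intro E. apply Qeq_eqR in E. rewrite RMicromega.Q2R_0 in E. lra.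
Qed.

Lemma Q2R_grid_point z : Q2R (z # grid) = IZR z / IZR (Z.pos grid).
Proof. reflexivity. Qed.

Lemma Q2R_inject_Z z : Q2R (inject_Z z) = IZR z.
Proof. unfold Q2R. simpl. field. Qed.

Lemma round_down_le q : Q2R (round_down q) <= Q2R q.
Proof.
  pose proof (Qle_Rle _ _ (Qfloor_le (q * inject_Z (Z.pos grid)))) as H.
  unfold round_down. rewrite Q2R_grid_point.
  rewrite Q2R_mult, !Q2R_inject_Z in H.
  assert (Hg : 0 < IZR (Z.pos grid)) by (apply IZR_lt; lia).
  apply Rmult_le_reg_r with (IZR (Z.pos grid)); [exact Hg|].
  unfold Rdiv. rewrite Rmult_assoc, Rinv_l by lra. lra.
Qed.

Lemma round_up_ge q : Q2R q <= Q2R (round_up q).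
Proof.
  pose proof (Qle_Rle _ _ (Qle_ceiling (q * inject_Z (Z.pos grid)))) as H.
  unfold round_up. rewrite Q2R_grid_point.
  rewrite Q2R_mult, !Q2R_inject_Z in H.
  assert (Hg : 0 < IZR (Z.pos grid)) by (apply IZR_lt; lia).
  apply Rmult_le_reg_r with (IZR (Z.pos grid)); [exact Hg|].
  unfold Rdiv. rewrite Rmult_assoc, Rinv_l by lra. lra.
Qed.

Ltac Q2R_push :=
  repeat first [ rewrite Q2R_plus | rewrite Q2R_mult
               | rewrite Q2R_2 | rewrite RMicromega.Q2R_1 ].

Lemma qbox_step_sound d B x :
  qbox_admissible B = true -> in_qbox B x -> in_qbox (qbox_step d B) (psi d x).
Proof.
  destruct B as [[a b] c].
  cbv beta iota zeta delta [in_qbox qbox_step qbox_admissible]. intros Hadm Hx.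
  apply andb_prop in Hadm as [Ha Hc].
  apply RMicromega.Qle_true in Ha, Hc. rewrite RMicromega.Q2R_0 in Ha.
  rewrite RMicromega.Q2R_1 in Hc.
  pose proof (Qle_Rle _ _ (Q.le_max_l b c)) as HbM.
  pose proof (Qle_Rle _ _ (Q.le_max_r b c)) as HcM.
  destruct Hx as [Hx1 Hxn]. pose proof (Hxn 2%nat ltac:(lia)) as Hx2.
  apply (psi_box d (Q2R a) (Q2R b) (Q2R c) (Q2R (Qmax b c)));
    [lra|lra|lra|lra| | | |split; assumption].
  - eapply Rle_trans; [apply round_down_le|].
    rewrite Q2R_qpow, Q2R_Qred, Q2R_div_pos; Q2R_push; lra.
  - eapply Rle_trans; [|apply round_up_ge].
    rewrite Q2R_qpow, Q2R_Qred, Q2R_div_pos; Q2R_push; [lra|lra].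
  - eapply Rle_trans; [|apply round_up_ge].
    rewrite Q2R_qpow, Q2R_Qred, Q2R_div_pos; Q2R_push; [apply Rle_refl|nra].
Qed.

Lemma qbox_orbit_lands_sound d n : forall B H x,
  qbox_orbit_lands d n B H = true -> in_qbox B x -> in_qbox H (Nat.iter n (psi d) x).
Proof.
  induction n as [|n IH]; intros B H x Hland Hx.
  - destruct B as [[a b] c], H as [[a' b'] c']. simpl in *.
    apply andb_prop in Hland as [Hland Hc]. apply andb_prop in Hland as [Ha Hb].
    apply RMicromega.Qle_true in Ha, Hb, Hc.
    eapply in_box_weaken; [exact Ha|exact Hb|exact Hc|exact Hx].
  - cbn [qbox_orbit_lands] in Hland. apply andb_prop in Hland as [Hadm Hland].
    rewrite Nat.iter_succ_r. apply (IH _ _ _ Hland). apply qbox_step_sound; assumption.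
Qed.

Definition hat_qbox (d : nat) : qbox :=
  match d with
  | 2%nat => (5#10, 7#10, 27#100)
  | 3%nat => (4#10, 6#10, 2#10)
  | 4%nat => (3#10, 5#10, 1#10)
  | 5%nat => (3#10, 4#10, 1#10)
  | 6%nat => (27#100, 32#100, 1#10)
  | 7%nat => (26#100, 27#100, 1#100)
  | _ => (0#1, 0#1, 0#1)
  end.

Lemma hat_qbox_in_box d x :
  (2 <= d <= 7)%nat -> in_qbox (hat_qbox d) x -> in_box (hat_a d) (hat_b d) (hat_c d) x.
Proof.
  intros Hd Hx. destruct d as [|[|[|[|[|[|[|[|d]]]]]]]]; try lia;
    (eapply in_box_weaken; [| | |exact Hx]; unfold Q2R; simpl; lra).
Qed.

Lemma orbit_lands_in_hat d :
  (2 <= d <= 7)%nat -> qbox_orbit_lands d 100 (0, 1, 3#5)%Q (hat_qbox d) = true.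
Proof. intros Hd. destruct d as [|[|[|[|[|[|[|[|d]]]]]]]]; try lia; vm_compute; reflexivity. Qed.

Theorem proposition2p8 (d : nat) (c : R) :
  (2 <= d <= 7)%nat -> 0 <= c < 1 ->
  exists K : nat, forall k : nat, (K <= k)%nat ->
    forall x : nat -> R, in_S 0 1 c x ->
      in_S (hat_a d) (hat_b d) (hat_c d) (psi_iter d k x).
Proof.
  intros Hd Hc.
  destruct (tail_bound_eventually c Hc) as [K HK].
  exists (K + 100)%nat. intros k Hk x [Hx Hbox].
  unfold psi_iter. split.
  - apply Nat.iter_invariant; [|exact Hx]. intros y. apply psi_preserves_calR. lia.
  - replace k with (100 + (k - 100))%nat by lia. rewrite Nat.iter_add.
    apply hat_qbox_in_box; [exact Hd|].
    apply (qbox_orbit_lands_sound d 100 (0, 1, 3#5)%Q); [apply orbit_lands_in_hat; exact Hd|].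
    pose proof (iter_psi_box_01 d c x (k - 100) ltac:(lia) ltac:(lra) Hbox) as H.
    rewrite HK in H by lia.
    eapply in_box_weaken; [| | |exact H]; unfold Q2R; simpl; lra.
Qed.
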